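(* Let $M$ be the 5-dimensional manifold of plane triangles $(w_1,w_2,w_3)$ of oriented area $3/2$. For such a triangle let $c=(w_1+w_2+w_3)/3$, $u=w_1-c$, $v=w_2-c$ (so $[u,v]=1$). Then the map $(w_1,w_2,w_3)\mapsto((u,v),c)$ is a $\mathbb Z_3$-equivariant diffeomorphism $M\to SL(2,\mathbb R)\times\mathbb R^2$. Moreover, the fibers of the projection $SL(2,\mathbb R)\times\mathbb R^2\to SL(2,\mathbb R)$ are transverse to the distribution $\mathcal F$ on $M$.
   Context: $[\cdot,\cdot]$ is the determinant of two plane vectors; a pair $(u,v)$ with $[u,v]=1$ is viewed as an element of $SL(2,\mathbb R)$. $\mathbb Z_3$ acts on $M$ by the cyclic permutation $\sigma(w_1,w_2,w_3)=(w_2,w_3,w_1)$, on $SL(2,\mathbb R)$ by $T(u,v)=(v,-u-v)$, and on $SL(2,\mathbb R)\times\mathbb R^2$ by $T$ on the first factor and trivially on the second. $\mathcal F$ is the 3-dimensional distribution on $M$ defined by: a tangent vector (velocities of $w_1,w_2,w_3$) lies in $\mathcal F$ iff the velocity of $w_i$ is parallel to the line $w_{i+1}w_{i+2}$ for $i=1,2,3$ (indices mod 3). *)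

From mathcomp Require Import all_boot all_order all_algebra.
From mathcomp Require Import reals.
Set Implicit Arguments. Unset Strict Implicit. Unset Printing Implicit Defensive.
Import Order.TTheory GRing.Theory Num.Theory.
Local Open Scope ring_scope.

Section Defs.
Variable R : realType.
Notation pt := 'rV[R]_2.

Definition det2 (u v : pt) : R := u 0 0 * v 0 1 - u 0 1 * v 0 0.

Definition tri := (pt * pt * pt)%type.
Definition w1 (w : tri) : pt := w.1.1.
Definition w2 (w : tri) : pt := w.1.2.
Definition w3 (w : tri) : pt := w.2.

Definition area (w : tri) : R := 2^-1 * det2 (w2 w - w1 w) (w3 w - w1 w).
Definition inM (w : tri) : Prop := area w = 3%:R / 2%:R.

(* SL(2,R) as pairs (u,v) with [u,v] = 1 *)
Definition inSL (p : pt * pt) : Prop := det2 p.1 p.2 = 1.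

Definition cen (w : tri) : pt := 3%:R^-1 *: (w1 w + w2 w + w3 w).
Definition Phi (w : tri) : (pt * pt) * pt :=
  ((w1 w - cen w, w2 w - cen w), cen w).
Definition Psi (p : (pt * pt) * pt) : tri :=
  ((p.2 + p.1.1, p.2 + p.1.2), p.2 - p.1.1 - p.1.2).

Definition sigma (w : tri) : tri := ((w2 w, w3 w), w1 w).
Definition Tsl (p : pt * pt) : pt * pt := (p.2, - p.1 - p.2).
Definition Tprod (p : (pt * pt) * pt) : (pt * pt) * pt := (Tsl p.1, p.2).

(* differential of the area function at w in direction t;
   T_w M = kernel of this (3/2 is a regular value of area) *)
Definition darea (w t : tri) : R :=
  2^-1 * (det2 (w2 t - w1 t) (w3 w - w1 w) + det2 (w2 w - w1 w) (w3 t - w1 t)).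
Definition tangentM (w t : tri) : Prop := darea w t = 0.

(* the distribution F: velocity of w_i parallel to the line w_{i+1} w_{i+2} *)
Definition inF (w t : tri) : Prop :=
  tangentM w t /\
  [/\ det2 (w1 t) (w3 w - w2 w) = 0,
      det2 (w2 t) (w1 w - w3 w) = 0 &
      det2 (w3 t) (w2 w - w1 w) = 0].

(* tangent space at w of the fiber through Phi w of the projection
   SL(2,R) x R^2 -> SL(2,R), pulled back to M: tangent vectors killed by
   the differential of (projection o Phi), which is (Phi t).1 since Phi is linear *)
Definition inFiberTangent (w t : tri) : Prop :=
  tangentM w t /\ (Phi t).1 = 0.

End Defs.

From mathcomp Require Import all_boot all_order all_algebra.
From mathcomp Require Import reals.
From mathcomp Require Import ring.
Set Implicit Arguments. Unset Strict Implicit. Unset Printing Implicit Defensive.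
Import GRing.Theory Num.Theory.
Local Open Scope ring_scope.

(* Phi is the invertible linear change of coordinates w |-> (w1 - c, w2 - c, c)
   with inverse Psi, and since w2 - w1 = v - u and w3 - w1 = -2u - v the area
   of w is 3/2 [u, v]; so Phi restricts to a bijection M -> SL(2,R) x R^2, and
   sigma fixes c while permuting (u, v, -u-v) as T does.
   The tangent directions of the fibers of the projection to SL(2,R) are the
   translations (d, d, d).  Given a tangent vector t to M, choose d so that
   t1 - d and t2 - d are parallel to the sides opposite w1 and w2: this is a
   2x2 Cramer system whose determinant is twice the area, hence nonzero.  The
   three "parallel to the opposite side" forms sum to -2 darea, which vanishes
   on tangent vectors and on translations, so the third condition holds too
   and t - (d, d, d) lies in F. *)

Section Triangles.
Variable R : realType.
Implicit Types (w t : tri R) (p : ('rV[R]_2 * 'rV[R]_2) * 'rV[R]_2)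
  (u v e d : 'rV[R]_2).

Local Ltac coords := repeat (congr (_, _)); apply/rowP => j; rewrite !mxE.

Lemma det2Bl u v e : det2 (u - v) e = det2 u e - det2 v e.
Proof. by rewrite /det2 !mxE; ring. Qed.

Lemma det2_cramer (a1 a2 : R) e1 e2 : det2 e1 e2 != 0 ->
  exists d, det2 d e1 = a1 /\ det2 d e2 = a2.
Proof.
move=> De; exists ((det2 e1 e2)^-1 *: (a2 *: e1 - a1 *: e2)).
by move: De; rewrite /det2 !mxE => De; split; field.
Qed.

Lemma Psi_Phi w : Psi (Phi w) = w.
Proof.
case: w => [[x1 x2] x3]; rewrite /Phi /Psi /cen /w1 /w2 /w3 /=.
by coords; field.
Qed.

Lemma Phi_Psi p : Phi (Psi p) = p.
Proof.
case: p => [[u v] c]; rewrite /Phi /Psi /cen /w1 /w2 /w3 /=.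
by coords; field.
Qed.

Lemma Phi_is_linear : linear (@Phi R).
Proof.
move=> a [[x1 x2] x3] [[y1 y2] y3]; rewrite /Phi /cen /w1 /w2 /w3 /=.
by coords; field.
Qed.

Lemma Psi_is_linear : linear (@Psi R).
Proof. by move=> a [[u1 v1] c1] [[u2 v2] c2]; rewrite /Psi /=; coords; ring. Qed.

Lemma area_Psi p : area (Psi p) = 3%:R / 2%:R * det2 p.1.1 p.1.2.
Proof.
case: p => [[u v] c]; rewrite /area /Psi /det2 /w1 /w2 /w3 /= !mxE.
by field.
Qed.

Lemma inM_Psi p : inM (Psi p) <-> inSL p.1.
Proof.
rewrite /inM /inSL area_Psi -[RHS]mulr1.
have nz32 : 3%:R / 2%:R != 0 :> R by rewrite mulf_neq0 ?invr_eq0 ?pnatr_eq0.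
by split=> [/(mulfI nz32) | ->].
Qed.

Lemma inM_Phi w : inM w <-> inSL (Phi w).1.
Proof. by rewrite -inM_Psi Psi_Phi. Qed.

Lemma cen_sigma w : cen (sigma w) = cen w.
Proof. by rewrite /cen /sigma /w1 /w2 /w3 /= addrC addrA. Qed.

Lemma Phi_sigma w : Phi (sigma w) = Tprod (Phi w).
Proof.
rewrite /Phi /Tprod /Tsl cen_sigma /=; congr (_, _, _).
case: w => [[x1 x2] x3]; rewrite /cen /w1 /w2 /w3 /sigma /=.
by coords; field.
Qed.

Definition translation d : tri R := ((d, d), d).

Lemma dareaB w t t' : darea w (t - t') = darea w t - darea w t'.
Proof. by rewrite /darea /det2 /w1 /w2 /w3 /= !mxE; ring. Qed.

Lemma darea_translation w d : darea w (translation d) = 0.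
Proof. by rewrite /darea /det2 /w1 /w2 /w3 /= !mxE; ring. Qed.

Lemma inFiberTangent_translation w d : inFiberTangent w (translation d).
Proof.
split; first exact: darea_translation.
rewrite /Phi /cen /w1 /w2 /w3 /=; coords; by field.
Qed.

Lemma darea_sides w t :
  2 * darea w t = - (det2 (w1 t) (w3 w - w2 w) + det2 (w2 t) (w1 w - w3 w)
                     + det2 (w3 t) (w2 w - w1 w)).
Proof. by rewrite /darea /det2 !mxE; field. Qed.

Lemma det2_sides w : det2 (w3 w - w2 w) (w1 w - w3 w) = 2 * area w.
Proof. by rewrite /area /det2 !mxE; field. Qed.

Lemma inF_sub_translation w t : area w != 0 -> tangentM w t ->
  exists d, inF w (t - translation d).
Proof.
move=> area_nz tw_t.
have sides_nz : det2 (w3 w - w2 w) (w1 w - w3 w) != 0.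
  by rewrite det2_sides mulf_neq0 ?pnatr_eq0.
have [d [d_e1 d_e2]] := det2_cramer (det2 (w1 t) (w3 w - w2 w))
                                    (det2 (w2 t) (w1 w - w3 w)) sides_nz.
have tw_f : tangentM w (t - translation d).
  by rewrite /tangentM dareaB darea_translation tw_t subrr.
exists d; split=> //.
have := darea_sides w (t - translation d); rewrite tw_f mulr0.
rewrite /w1 /w2 /w3 /= !det2Bl -d_e1 -d_e2 !subrr !add0r => /esym/eqP.
by rewrite oppr_eq0 => /eqP.
Qed.

End Triangles.

Theorem lemma4p2 (R : realType) :
  (* Phi maps M into SL(2,R) x R^2, Psi maps SL(2,R) x R^2 into M *)
  (forall w : tri R, inM w -> inSL (Phi w).1) /\
  (forall p : ('rV[R]_2 * 'rV[R]_2) * 'rV[R]_2, inSL p.1 -> inM (Psi p)) /\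
  (* they are mutually inverse *)
  (forall w : tri R, inM w -> Psi (Phi w) = w) /\
  (forall p : ('rV[R]_2 * 'rV[R]_2) * 'rV[R]_2, inSL p.1 -> Phi (Psi p) = p) /\
  (* both are restrictions of linear (hence smooth) maps of the ambient spaces *)
  linear (@Phi R) /\ linear (@Psi R) /\
  (* Z_3-equivariance *)
  (forall w : tri R, inM w -> Phi (sigma w) = Tprod (Phi w)) /\
  (* the fibers of SL(2,R) x R^2 -> SL(2,R) are transverse to F *)
  (forall w t : tri R, inM w -> tangentM w t ->
     exists f g : tri R, inF w f /\ inFiberTangent w g /\ t = f + g).
Proof.
split; first by move=> w /inM_Phi.
split; first by move=> p /inM_Psi.
split; first by move=> w _; exact: Psi_Phi.
split; first by move=> p _; exact: Phi_Psi.
split; first exact: Phi_is_linear.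
split; first exact: Psi_is_linear.
split; first by move=> w _; exact: Phi_sigma.
move=> w t Mw tw_t.
have area_nz : area w != 0 by rewrite Mw mulf_neq0 ?invr_eq0 ?pnatr_eq0.
have [d Fd] := inF_sub_translation area_nz tw_t.
exists (t - translation d), (translation d).
by split; [|split; [exact: inFiberTangent_translation | rewrite subrK]].
Qed.
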